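(* Let $P$ be a finite poset and $X:P\to\mathcal{P}_{<\infty}$ a diagram of finite posets with transition maps $f_{pq}=X(p\to q)$. Suppose $p$ is a down beat point of $P$ dominated by $q$ (i.e. $q$ is the maximum of $\{r\in P: r<p\}$), and that $f_{qp}^{-1}(U_x)$ is a contractible finite space for every $x\in X_p$. Then $\operatorname{\underline{hocolim}} X$ collapses to $\operatorname{\underline{hocolim}} X|_{P\smallsetminus\{p\}}$. In particular they are weak equivalent.
   Context: $P$ is viewed as a category with a unique arrow $p\to q$ iff $p\le q$; $\mathcal{P}_{<\infty}$ is the category of finite posets and order-preserving maps. $\operatorname{\underline{hocolim}} X$ is the poset on $\coprod_{p}X_p$ keeping the order within each $X_p$ and, for $x\in X_p$, $y\in X_q$, $p\le q$, setting $x\le y$ iff $f_{pq}(x)\le y$ in $X_q$; $X|_{P\smallsetminus\{p\}}$ is the restricted diagram. For $x$ in a finite poset $Y$: $U_x=\{y\le x\}$, $\hat U_x=U_x\smallsetminus\{x\}$, $\hat F_x=\{y>x\}$. $x$ is an up beat point if $\hat F_x$ has a minimum, a down beat point if $\hat U_x$ has a maximum. A finite poset is contractible (dismantlable) if it can be reduced to one point by removing beat points one at a time. $x$ is a down (resp. up) weak point if $\hat U_x$ (resp. $\hat F_x$) is contractible; removing a weak point is an elementary collapse, and $Y$ collapses to $Z$ if $Z$ is obtained from $Y$ by a sequence of elementary collapses. Two finite posets are weak equivalent if their order complexes are homotopy equivalent. *)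

(* A finite poset is modelled as a subset A of a finType T,
   ordered by the restriction of a relation le : rel T. *)
From mathcomp Require Import all_boot.
Set Implicit Arguments. Unset Strict Implicit. Unset Printing Implicit Defensive.

Definition is_poset (T : finType) (le : rel T) : Prop :=
  [/\ reflexive le, antisymmetric le & transitive le].

Section FiniteSpaces.
Variables (T : finType) (le : rel T).

Definition ltr (x y : T) : bool := (x != y) && le x y.

Definition hatU (A : {set T}) (x : T) : {set T} := [set y in A | ltr y x].
Definition hatF (A : {set T}) (x : T) : {set T} := [set y in A | ltr x y].
Definition Ux (A : {set T}) (x : T) : {set T} := [set y in A | le y x].

Definition is_max (S : {set T}) (m : T) : Prop :=
  m \in S /\ forall y, y \in S -> le y m.
Definition is_min (S : {set T}) (m : T) : Prop :=
  m \in S /\ forall y, y \in S -> le m y.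

Definition up_beat_point (A : {set T}) (x : T) : Prop :=
  x \in A /\ exists m, is_min (hatF A x) m.
Definition down_beat_point (A : {set T}) (x : T) : Prop :=
  x \in A /\ exists m, is_max (hatU A x) m.
Definition beat_point (A : {set T}) (x : T) : Prop :=
  up_beat_point A x \/ down_beat_point A x.

(* contractible = dismantlable: reducible to one point by removing beat
   points one at a time *)
Inductive contractible : {set T} -> Prop :=
  | contractible_pt (x : T) : contractible [set x]
  | contractible_step (A : {set T}) (x : T) :
      beat_point A x -> contractible (A :\ x) -> contractible A.

Definition down_weak_point (A : {set T}) (x : T) : Prop :=
  x \in A /\ contractible (hatU A x).
Definition up_weak_point (A : {set T}) (x : T) : Prop :=
  x \in A /\ contractible (hatF A x).
Definition weak_point (A : {set T}) (x : T) : Prop :=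
  down_weak_point A x \/ up_weak_point A x.

Inductive collapses : {set T} -> {set T} -> Prop :=
  | collapses_refl (A : {set T}) : collapses A A
  | collapses_step (A B : {set T}) (x : T) :
      weak_point A x -> collapses (A :\ x) B -> collapses A B.

End FiniteSpaces.

(* A diagram X : P -> finite posets, with transition maps f p q = X(p -> q)
   (only meaningful when p <= q). *)
Definition is_diagram (P : finType) (leP : rel P) (X : P -> finType)
    (leX : forall p, rel (X p)) (f : forall p q, X p -> X q) : Prop :=
  [/\ is_poset leP,
      forall p, is_poset (leX p),
      forall p q, leP p q -> forall x y : X p,
          leX p x y -> leX q (f p q x) (f p q y),
      forall p (x : X p), f p p x = x &
      forall p q r (x : X p), leP p q -> leP q r ->
          f q r (f p q x) = f p r x].

(* order of the (non-Hausdorff) homotopy colimit on the sigma type *)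
Definition hocolim_le (P : finType) (leP : rel P) (X : P -> finType)
    (leX : forall p, rel (X p)) (f : forall p q, X p -> X q)
    (a b : {p : P & X p}) : bool :=
  leP (tag a) (tag b) && leX (tag b) (f (tag a) (tag b) (tagged a)) (tagged b).

(* underlying set of hocolim X|_{P \ {p}} *)
Definition hocolim_restr (P : finType) (X : P -> finType) (p : P)
  : {set {r : P & X r}} := [set a | tag a != p].

(* Remove the points of X_p from hocolim X one at a time, minimal ones first.
   When x is minimal among the remaining points of X_p, the points strictly below
   (p, x) are the (r, y) with r < p and f_rp(y) <= x.  Since q dominates every
   r < p, pushing (r, y) forward to (q, f_rq(y)) is an upward retraction of this
   lower link onto the copy of f_qp^-1(U_x), which is contractible; hence so is
   the link, and (p, x) is a down weak point. *)

From mathcomp Require Import all_boot.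
Set Implicit Arguments. Unset Strict Implicit. Unset Printing Implicit Defensive.

Section FinitePosets.
Variables (T : finType) (le : rel T).
Hypothesis leT : is_poset le.

Lemma is_poset_dual : is_poset (fun x y => le y x).
Proof.
case: leT => le_refl le_anti le_trans; split=> // [x y | y x z xy yz].
  by rewrite andbC; apply: le_anti.
exact: le_trans yz xy.
Qed.

Lemma exists_maximal (S : {set T}) a0 : a0 \in S ->
  exists2 a, a \in S & forall b, b \in S -> le a b -> b = a.
Proof.
case: leT => le_refl le_anti le_trans a0S.
pose down a := [set b in S | le b a].
have [a aS a_max] := @arg_maxnP _ a0 (mem S) (fun a => #|down a|) a0S.
exists a => // b bS ab.
have sub_ab : down a \subset down b.
  by apply/subsetP => c; rewrite !inE => /andP[-> ca]; apply: le_trans ca ab.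
have eq_ab : down a = down b by apply/eqP; rewrite eqEcard sub_ab; exact: a_max.
have : b \in down a by rewrite eq_ab inE bS le_refl.
by rewrite inE => /andP[_ ba]; apply: le_anti; rewrite ba ab.
Qed.

Section UpperRetraction.
Variables (B C : {set T}) (r : T -> T).
Hypotheses (CB : C \subset B) (r_BC : {in B, forall a, r a \in C})
  (r_id : {in C, forall c, r c = c}) (r_ge : {in B, forall a, le a (r a)})
  (r_mono : {in B &, {homo r : a b / le a b}}).

Lemma up_beat_point_retract a :
  a \in B :\: C -> (forall b, b \in B :\: C -> le a b -> b = a) ->
  up_beat_point le B a.
Proof.
case/setDP=> aB aC a_max; split=> //; exists (r a); split.
  rewrite inE /ltr (subsetP CB) ?r_BC ?r_ge // andbT.
  by apply: contraNneq aC => ->; apply: r_BC.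
move=> b; rewrite inE /ltr => /andP[bB /andP[ab lab]].
have [bC | bC] := boolP (b \in C); first by rewrite -(r_id bC); apply: r_mono.
have ba : b = a by apply: a_max; rewrite // inE bC bB.
by rewrite ba eqxx in ab.
Qed.

End UpperRetraction.

(* Removing the points of [B :\: C] from the top down, each one is an up beat
   point whose upper cover is its image under [r]. *)
Lemma contractible_upper_retract (B C : {set T}) (r : T -> T) :
  contractible le C -> C \subset B ->
  {in B, forall a, r a \in C} -> {in C, forall c, r c = c} ->
  {in B, forall a, le a (r a)} -> {in B &, {homo r : a b / le a b}} ->
  contractible le B.
Proof.
move=> cC; have [k] := ubnP #|B :\: C|.
elim: k B => // k IH B sizeB CB r_BC r_id r_ge r_mono.
have [BC0 | [a0 a0BC]] := set_0Vmem (B :\: C).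
  suff -> : B = C by [].
  by apply/eqP; rewrite eqEsubset CB andbT -setD_eq0 BC0.
have [a aBC a_max] := exists_maximal a0BC.
have a_beat := up_beat_point_retract CB r_BC r_id r_ge r_mono aBC a_max.
apply: (contractible_step (or_introl a_beat)).
have aC : a \notin C by case/setDP: aBC.
apply: IH => //.
- by move: sizeB; rewrite setDDl setUC -setDDl (cardsD1 a) aBC.
- apply/subsetP => c cC'; rewrite !inE (subsetP CB) // andbT.
  by apply: contraNneq aC => <-.
- by move=> x /setD1P[_ xB]; apply: r_BC.
- by move=> x /setD1P[_ xB]; apply: r_ge.
- by move=> x y /setD1P[_ xB] /setD1P[_ yB]; apply: r_mono.
Qed.

End FinitePosets.

Lemma exists_minimal (T : finType) (le : rel T) (S : {set T}) a0 :
  is_poset le -> a0 \in S ->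
  exists2 a, a \in S & forall b, b \in S -> le b a -> b = a.
Proof. by move=> leT; apply: (exists_maximal (is_poset_dual leT)). Qed.

Section OrderEmbedding.
Variables (T1 T2 : finType) (le1 : rel T1) (le2 : rel T2) (g : T1 -> T2).
Hypotheses (g_inj : injective g) (g_mono : {mono g : x y / le1 x y >-> le2 x y}).

Lemma imset_sep (A : {set T1}) (Q : pred T2) :
  [set y in g @: A | Q y] = g @: [set x in A | Q (g x)].
Proof.
apply/setP => y; rewrite inE; apply/andP/imsetP => [[/imsetP[x xA ->] Qgx] | [x]].
  by exists x; rewrite // inE xA.
by rewrite inE => /andP[xA Qgx] ->; rewrite imset_f.
Qed.

Lemma ltr_mono : {mono g : x y / ltr le1 x y >-> ltr le2 x y}.
Proof. by move=> x y; rewrite /ltr (inj_eq g_inj) g_mono. Qed.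

Lemma hatU_imset (A : {set T1}) x : hatU le2 (g @: A) (g x) = g @: hatU le1 A x.
Proof. by rewrite /hatU imset_sep; under eq_finset => y do rewrite ltr_mono. Qed.

Lemma hatF_imset (A : {set T1}) x : hatF le2 (g @: A) (g x) = g @: hatF le1 A x.
Proof. by rewrite /hatF imset_sep; under eq_finset => y do rewrite ltr_mono. Qed.

Lemma imsetD1_inj (A : {set T1}) x : g @: A :\ g x = g @: (A :\ x).
Proof.
have setD1_sep (U : finType) (B : {set U}) u : B :\ u = [set y in B | y != u].
  by apply/setP => y; rewrite !inE andbC.
by rewrite !setD1_sep imset_sep; under eq_finset => y do rewrite (inj_eq g_inj).
Qed.

Lemma is_max_imset (S : {set T1}) m :
  is_max le1 S m -> is_max le2 (g @: S) (g m).
Proof.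
by case=> mS m_max; split=> [|_ /imsetP[y yS ->]]; rewrite ?imset_f ?g_mono ?m_max.
Qed.

Lemma is_min_imset (S : {set T1}) m :
  is_min le1 S m -> is_min le2 (g @: S) (g m).
Proof.
by case=> mS m_min; split=> [|_ /imsetP[y yS ->]]; rewrite ?imset_f ?g_mono ?m_min.
Qed.

Lemma beat_point_imset (A : {set T1}) x :
  beat_point le1 A x -> beat_point le2 (g @: A) (g x).
Proof.
case=> [[xA [m /is_min_imset]] | [xA [m /is_max_imset]]].
  by rewrite -hatF_imset => gm; left; split; [apply: imset_f | exists (g m)].
by rewrite -hatU_imset => gm; right; split; [apply: imset_f | exists (g m)].
Qed.

Lemma contractible_imset (A : {set T1}) :
  contractible le1 A -> contractible le2 (g @: A).
Proof.
elim=> [x | {}A x /beat_point_imset gx _ IH].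
  by rewrite imset_set1; apply: contractible_pt.
by apply: (contractible_step gx); rewrite imsetD1_inj.
Qed.

End OrderEmbedding.

Unset Implicit Arguments.

Section HomotopyColimit.
Variables (P : finType) (leP : rel P) (X : P -> finType)
  (leX : forall p, rel (X p)) (f : forall p q, X p -> X q).
Hypothesis diagX : is_diagram leP leX f.
Local Notation hle := (hocolim_le leP leX f).

Lemma is_poset_hocolim : is_poset hle.
Proof.
have [[leP_refl leP_anti leP_trans] posX f_mono f_id f_comp] := diagX.
split=> [[i x] | [i x] [j y] | [j y] [i x] [k z]]; rewrite /hocolim_le /=.
- by rewrite leP_refl f_id; case: (posX i) => leX_refl _ _; apply: leX_refl.
- case/andP=> /andP[ij xy] /andP[ji yx].
  have eq_ij : i = j by apply: leP_anti; rewrite ij ji.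
  subst j; rewrite !f_id in xy yx.
  by case: (posX i) => _ leX_anti _; rewrite (leX_anti x y) // xy yx.
- case/andP=> ij xy /andP[jk yz]; rewrite (leP_trans _ _ _ ij jk) /=.
  case: (posX k) => _ _ leX_trans; apply: leX_trans yz.
  by rewrite -(f_comp _ _ _ x ij jk); apply: f_mono.
Qed.

Variable p : P.

Definition hocolim_with (S : {set X p}) : {set {r : P & X r}} :=
  hocolim_restr X p :|: [set Tagged X y | y in S].

Lemma Tagged_inj r : injective (fun y : X r => Tagged X y).
Proof. exact: eq_from_Tagged. Qed.

Lemma mem_hocolim_with_p (S : {set X p}) y :
  (Tagged X y \in hocolim_with S) = (y \in S).
Proof. by rewrite !inE /= eqxx (mem_imset _ _ (@Tagged_inj p)). Qed.

Lemma mem_hocolim_with_neq (S : {set X p}) r (y : X r) :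
  r != p -> Tagged X y \in hocolim_with S.
Proof. by rewrite !inE /= => ->. Qed.

Lemma Tagged_neq r (y : X r) (x : X p) : r != p -> Tagged X y != Tagged X x.
Proof. by move=> neq_rp; apply: contraNneq neq_rp => /(congr1 tag) /= ->. Qed.

Definition hocolim_below (x : X p) : {set {r : P & X r}} :=
  [set a : {r : P & X r} |
    [&& tag a != p, leP (tag a) p & leX p (f (tag a) p (tagged a)) x]].

Lemma hocolim_with_setT : hocolim_with [set: X p] = [set: {r : P & X r}].
Proof.
apply/setP => -[r y]; rewrite in_setT; have [eq_rp | neq_rp] := eqVneq r p.
  by subst r; rewrite mem_hocolim_with_p in_setT.
exact: mem_hocolim_with_neq.
Qed.

Lemma hocolim_with_D1 (S : {set X p}) x :
  hocolim_with S :\ Tagged X x = hocolim_with (S :\ x).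
Proof.
apply/setP => -[r y]; rewrite in_setD1; have [eq_rp | neq_rp] := eqVneq r p.
  by subst r; rewrite !mem_hocolim_with_p (inj_eq (@Tagged_inj p)) in_setD1.
by rewrite !mem_hocolim_with_neq // Tagged_neq.
Qed.

Lemma hatU_hocolim_with_minimal (S : {set X p}) x :
  x \in S -> (forall y, y \in S -> leX p y x -> y = x) ->
  hatU hle (hocolim_with S) (Tagged X x) = hocolim_below x.
Proof.
have [_ _ _ f_id _] := diagX.
move=> xS x_min; apply/setP => -[r y]; rewrite inE.
have [eq_rp | neq_rp] := eqVneq r p.
  subst r; rewrite mem_hocolim_with_p !inE /ltr /hocolim_le /= eqxx f_id /=.
  apply/and4P => -[yS neq_yx _ yx].
  by rewrite (x_min y yS yx) eqxx in neq_yx.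
by rewrite mem_hocolim_with_neq // !inE /ltr /hocolim_le /= Tagged_neq // neq_rp.
Qed.

Variable q : P.
Hypothesis q_max : is_max leP (hatU leP setT p) q.
Hypothesis fiber_contractible :
  forall x : X p, contractible (leX q) [set y : X q | leX p (f q p y) x].

Lemma q_lt_p : ltr leP q p.
Proof. by case: q_max; rewrite /hatU => /setIdP[]. Qed.

Lemma below_p_le_q r : r != p -> leP r p -> leP r q.
Proof.
by move=> neq_rp rp; case: q_max => _; apply; rewrite !inE /ltr neq_rp.
Qed.

Lemma contractible_hocolim_below x : contractible hle (hocolim_below x).
Proof.
have [[leP_refl _ _] posX f_mono f_id f_comp] := diagX.
have /andP[neq_qp qp] := q_lt_p.
pose push (a : {r : P & X r}) := Tagged X (f (tag a) q (tagged a)).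
apply: (contractible_upper_retract is_poset_hocolim (r := push)
  (C := [set Tagged X y | y in [set y : X q | leX p (f q p y) x]])).
- apply: contractible_imset (fiber_contractible x); first exact: Tagged_inj.
  by move=> y z; rewrite /hocolim_le /= leP_refl f_id.
- apply/subsetP => a /imsetP[y]; rewrite inE => yx ->.
  by rewrite inE /= neq_qp qp yx.
- move=> [r y]; rewrite inE /= => /and3P[neq_rp rp yx].
  by rewrite /push /= imset_f // inE f_comp // below_p_le_q.
- by move=> _ /imsetP[y _ ->]; rewrite /push /= f_id.
- move=> [r y]; rewrite inE /= => /and3P[neq_rp rp _].
  rewrite /hocolim_le /= below_p_le_q //.
  by case: (posX q) => leX_refl _ _; apply: leX_refl.
move=> [r y] [s z]; rewrite !inE /= => _ /and3P[neq_sp sp _].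
rewrite /hocolim_le /= leP_refl f_id => /andP[rs yz].
have sq := below_p_le_q s neq_sp sp.
by rewrite -(f_comp r s q y rs sq); apply: f_mono.
Qed.

Lemma collapses_hocolim_with (S : {set X p}) :
  collapses hle (hocolim_with S) (hocolim_restr X p).
Proof.
have [_ posX _ _ _] := diagX.
have [k] := ubnP #|S|; elim: k S => // k IH S sizeS.
have [-> | [x0 x0S]] := set_0Vmem S.
  by rewrite /hocolim_with imset0 setU0; apply: collapses_refl.
have [x xS x_min] := exists_minimal (posX p) x0S.
apply: (@collapses_step _ _ _ _ (Tagged X x)).
  left; split; first by rewrite mem_hocolim_with_p.
  by rewrite hatU_hocolim_with_minimal //; apply: contractible_hocolim_below.
by rewrite hocolim_with_D1; apply: IH; move: sizeS; rewrite (cardsD1 x) xS.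
Qed.

End HomotopyColimit.

Theorem proposition2p8 (P : finType) (leP : rel P) (X : P -> finType)
    (leX : forall p, rel (X p)) (f : forall p q, X p -> X q)
    (p q : P) :
  is_diagram leP leX f ->
  is_max leP (hatU leP setT p) q ->
  (forall x : X p, contractible (leX q) [set y : X q | leX p (f q p y) x]) ->
  collapses (hocolim_le leP leX f) setT (hocolim_restr X p).
Proof.
move=> diagX q_max fiber_contractible.
rewrite -(hocolim_with_setT P X p).
exact: (collapses_hocolim_with _ _ _ _ _ diagX _ _ q_max fiber_contractible).
Qed.
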